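(* Let $p\equiv1\pmod 4$ be a prime power and $q=\frac12(p+1)$. Then there exist two weighing matrices of order $4q$ and weight $4q-2$ that are quasi-unbiased for the parameters $(4q,4q-2,4,(2q-1)^2)$.
   Context: A weighing matrix of order $n$ and weight $k$ is an $n\times n$ $(0,1,-1)$-matrix $W$ with $WW^\top=kI_n$. Weighing matrices $W_1,W_2$ of order $n$ and weight $k$ are quasi-unbiased for parameters $(n,k,l,a)$ if $\frac1{\sqrt a}W_1W_2^\top$ is a weighing matrix of order $n$ and weight $l$. *)

From HB Require Import structures.
From mathcomp Require Import all_boot all_order all_algebra.
Set Implicit Arguments. Unset Strict Implicit. Unset Printing Implicit Defensive.
Import Order.TTheory GRing.Theory Num.Theory.
Local Open Scope ring_scope.

Definition weighing_matrix (R : numDomainType) (n k : nat) (W : 'M[R]_n) : Prop :=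
  (forall i j, W i j = 0 \/ W i j = 1 \/ W i j = -1) /\
  W *m W^T = (k%:R)%:M.

Definition quasi_unbiased (R : rcfType) (n k l a : nat) (W1 W2 : 'M[R]_n) : Prop :=
  [/\ weighing_matrix k W1, weighing_matrix k W2 &
      weighing_matrix l ((Num.sqrt (a%:R : R))^-1 *: (W1 *m W2^T))].

Definition prime_power (p : nat) : Prop :=
  exists r k : nat, prime r /\ (0 < k)%N /\ p = (r ^ k)%N.

From HB Require Import structures.
From mathcomp Require Import all_boot all_order all_algebra all_fingroup all_field.
From mathcomp Require Import ring zify.
Import Order.TTheory GRing.Theory Num.Theory.
Local Open Scope ring_scope.

(* The Paley conference matrix C of order p + 1, bordering the Jacobsthal matrix
   [chi (a - b)] of the quadratic character chi of GF(p), satisfies C C^T = p I: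
   this rests on the character sums  sum_x chi x = 0  and
   sum_c chi c chi (c + d) = -1  for d <> 0.  For a permutation matrix P without
   fixed points, W1 = [C C; C -C] and W2 = [C D; C -D] with D = P^-1 C are
   weighing matrices of weight 2p = 4q - 2, and
   W1 W2^T = p [I + P, I - P; I - P, I + P],  where the second factor has weight 4
   because P and I have disjoint supports.  The congruence p = 1 mod 4 is only
   used to make p odd. *)

Definition trit {R : numDomainType} (x : R) : Prop := x = 0 \/ x = 1 \/ x = -1.

Lemma trit_opp {R : numDomainType} (x : R) : trit x -> trit (- x).
Proof. by case=> [|[|]] ->; rewrite ?oppr0 ?opprK /trit; auto. Qed.

Lemma trit_block_mx {R : numDomainType} m1 m2 n1 n2 (A : 'M[R]_(m1, n1)) (B : 'M_(m1, n2))
    (C : 'M_(m2, n1)) (D : 'M_(m2, n2)) :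
  (forall i j, trit (A i j)) -> (forall i j, trit (B i j)) ->
  (forall i j, trit (C i j)) -> (forall i j, trit (D i j)) ->
  forall i j, trit (block_mx A B C D i j).
Proof.
move=> tA tB tC tD i j; rewrite -(splitK i) -(splitK j).
by case: (split i) => i'; case: (split j) => j';
  rewrite ?block_mxEul ?block_mxEur ?block_mxEdl ?block_mxEdr.
Qed.

Lemma mul_const_mx {R : pzSemiRingType} m n p (a b : R) :
  (const_mx a : 'M_(m, n)) *m (const_mx b : 'M_(n, p)) = const_mx (a * b *+ n).
Proof.
apply/matrixP => i j; rewrite !mxE (eq_bigr (fun _ => a * b)) ?sumr_const ?card_ord //.
by move=> k _; rewrite !mxE.
Qed.

Lemma expf_card_pred {F : finFieldType} (x : F) : x != 0 -> x ^+ #|F|.-1 = 1.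
Proof.
move=> x_nz; apply: (mulfI x_nz); rewrite -exprS mulr1.
by rewrite prednK ?expf_card // (ltn_trans _ (finNzRing_gt1 F)).
Qed.

Section QuadraticCharacter.

Variables (R : numDomainType) (F : finFieldType).
Hypothesis oddF : odd #|F|.

(* (#|F| - 1) / 2, as #|F| is odd *)
Local Notation h := #|F|./2.

Lemma expf_half_card {x : F} : x != 0 -> x ^+ h = 1 \/ x ^+ h = -1.
Proof.
move=> x_nz; have /eqP := expf_card_pred x x_nz.
by rewrite -(odd_halfK oddF) -mul2n mulnC exprM sqrf_eq1 => /orP[] /eqP; auto.
Qed.

Lemma half_card_gt0 : (0 < h)%N.
Proof. by have := finNzRing_gt1 F; move: oddF; case: #|F| => [|[|[|n]]]. Qed.

(* 'X^h - 1 has at most h roots among the 2h nonzero elements. *)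
Lemma exists_nonresidue : exists2 x : F, x != 0 & x ^+ h != 1.
Proof.
have [x /andP[x_nz xh_neq1]|] := pickP [pred x : F | (x != 0) && (x ^+ h != 1)].
  by exists x.
move=> all_res; suff: (#|F|.-1 <= h)%N.
  by rewrite -(odd_halfK oddF) -addnn; have := half_card_gt0; lia.
rewrite -(cardC1 (0 : F)) cardE; apply: max_unity_roots half_card_gt0 _ (enum_uniq _).
apply/allP => x; rewrite mem_enum inE => x_nz; rewrite unity_rootE.
by have := all_res x; rewrite /= x_nz => /negbFE.
Qed.

Lemma oppr1_neq1 : (-1 : F) != 1.
Proof.
have [x x_nz] := exists_nonresidue.
by case: (expf_half_card x_nz) => ->; rewrite ?eqxx.
Qed.

Definition qchar (x : F) : R := if x == 0 then 0 else if x ^+ h == 1 then 1 else -1.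

Lemma qchar0 : qchar 0 = 0.
Proof. by rewrite /qchar eqxx. Qed.

Lemma qchar1 : qchar 1 = 1.
Proof. by rewrite /qchar oner_eq0 expr1n eqxx. Qed.

Lemma qchar_trit x : trit (qchar x).
Proof. by rewrite /qchar /trit; case: eqP; [left | case: eqP; right; [left | right]]. Qed.

Lemma qcharP {x : F} : x != 0 ->
  (x ^+ h = 1 /\ qchar x = 1) \/ (x ^+ h = -1 /\ qchar x = -1).
Proof.
move=> x_nz; rewrite /qchar (negbTE x_nz).
by case: (expf_half_card x_nz) => ->; [left | right]; rewrite ?eqxx ?(negbTE oppr1_neq1).
Qed.

Lemma qcharM x y : qchar (x * y) = qchar x * qchar y.
Proof.
have [-> | x_nz] := eqVneq x 0; first by rewrite mul0r qchar0 mul0r.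
have [-> | y_nz] := eqVneq y 0; first by rewrite mulr0 qchar0 mulr0.
rewrite {1}/qchar mulf_eq0 (negbTE x_nz) (negbTE y_nz) exprMn.
case: (qcharP x_nz) => -[-> ->]; case: (qcharP y_nz) => -[-> ->];
  by rewrite ?mulr1 ?mulrN1 ?mulrNN ?opprK ?eqxx ?(negbTE oppr1_neq1).
Qed.

Lemma qchar_sqr x : qchar x ^+ 2 = (x != 0)%:R.
Proof.
rewrite /qchar; case: eqP => _ /=; first by rewrite expr0n.
by case: eqP => _; rewrite ?expr1n ?sqrrN ?expr1n.
Qed.

Lemma sum_qchar : \sum_x qchar x = 0.
Proof.
have [a a_nz ah_neq1] := exists_nonresidue.
have qa : qchar a = -1 by rewrite /qchar (negbTE a_nz) (negbTE ah_neq1).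
apply/eqP; rewrite -eqNr; apply/eqP.
rewrite {2}(reindex_inj (mulfI a_nz)) /=.
by rewrite -mulN1r mulr_sumr; apply: eq_bigr => x _; rewrite qcharM qa.
Qed.

Lemma sum_qcharB u : \sum_x qchar (u - x) = 0.
Proof.
rewrite (reindex_inj (can_inj (subKr u))) /=.
by under eq_bigr do rewrite subKr; exact: sum_qchar.
Qed.

(* [qchar c * qchar (c + d) = qchar (1 + d / c)] for [c != 0], and [1 + d / c]
   takes every value except [1] exactly once. *)
Lemma sum_qchar_mulD d : d != 0 -> \sum_c qchar c * qchar (c + d) = -1.
Proof.
move=> d_nz.
have qcharD c : qchar c * qchar (c + d) = qchar (1 + d / c) - (c == 0)%:R.
  have [-> | c_nz] := eqVneq c 0; first by rewrite qchar0 mul0r invr0 mulr0 addr0 qchar1 subrr.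
  have -> : c + d = c * (1 + d / c) by rewrite mulrDr mulr1 mulrCA divff ?mulr1.
  by rewrite subr0 qcharM mulrA -expr2 qchar_sqr c_nz mul1r.
rewrite (eq_bigr _ (fun c _ => qcharD c)) sumrB.
have -> : \sum_c qchar (1 + d / c) = \sum_c qchar c.
  symmetry; apply: (reindex_inj (h := fun c => 1 + d / c)).
  by move=> a b /addrI /(mulfI d_nz) /invr_inj.
rewrite sum_qchar sub0r (bigD1 0) //= eqxx big1 ?addr0 // => c.
by move/negbTE ->.
Qed.

Lemma sum_qcharB_mul u v :
  \sum_x qchar (u - x) * qchar (v - x) = if u == v then #|F|.-1%:R else -1.
Proof.
have vBuB x : v - (u - x) = x + (v - u) by rewrite opprB addrCA addrC.
rewrite (reindex_inj (can_inj (subKr u))) /=.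
under eq_bigr do rewrite subKr vBuB.
have [<- | u_neq_v] := eqVneq u v; last by rewrite sum_qchar_mulD // subr_eq0 eq_sym.
under eq_bigr do rewrite subrr addr0 -expr2 qchar_sqr.
rewrite (bigD1 0) //= eqxx add0r (eq_bigr (fun _ => 1)) => [|x /negbTE -> //].
by rewrite sumr_const cardC1.
Qed.

Definition jacobsthal_mx : 'M[R]_#|F| := \matrix_(a, b) qchar (enum_val a - enum_val b).

Lemma jacobsthal_mx_trit a b : trit (jacobsthal_mx a b).
Proof. by rewrite mxE; apply: qchar_trit. Qed.

Lemma jacobsthal_mx_const1 : jacobsthal_mx *m const_mx 1 = 0 :> 'cV_#|F|.
Proof.
apply/matrixP => a j; rewrite !mxE -[RHS](sum_qcharB (enum_val a)).
by rewrite (big_enum_val (A := F)); apply: eq_bigr => b _; rewrite !mxE mulr1.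
Qed.

Lemma jacobsthal_mx_tr : jacobsthal_mx *m jacobsthal_mx^T = #|F|%:R%:M - const_mx 1.
Proof.
apply/matrixP => a b; rewrite !mxE.
rewrite (eq_bigr (fun c => qchar (enum_val a - enum_val c) * qchar (enum_val b - enum_val c))).
  rewrite -(big_enum_val (A := F) (fun x => qchar (enum_val a - x) * qchar (enum_val b - x))).
  rewrite sum_qcharB_mul (inj_eq enum_val_inj).
  have F_gt0 : (0 < #|F|)%N by apply: ltnW (finNzRing_gt1 F).
  case: eqP => _; rewrite ?mulr1n ?mulr0n ?sub0r //.
  by rewrite -[in RHS](prednK F_gt0) -natr1 addrK.
by move=> c _; rewrite !mxE.
Qed.

Definition paley_mx : 'M[R]_(1 + #|F|) :=
  block_mx 0 (const_mx 1) (const_mx 1) jacobsthal_mx.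

Lemma paley_mx_weighing : weighing_matrix #|F| paley_mx.
Proof.
split.
  by apply: trit_block_mx => i j; [rewrite mxE /trit; auto.. | apply: jacobsthal_mx_trit].
have const1_J : const_mx 1 *m jacobsthal_mx^T = 0 :> 'rV_#|F|.
  by have := congr1 trmx jacobsthal_mx_const1; rewrite trmx_mul trmx_const trmx0.
rewrite tr_block_mx trmx0 !trmx_const mulmx_block !mul0mx mulmx0 !add0r !mul_const_mx.
rewrite const1_J jacobsthal_mx_const1 jacobsthal_mx_tr mul1r.
rewrite (addrC (const_mx 1)) subrK [RHS]scalar_mx_block.
by congr block_mx; apply/matrixP => i j; rewrite [i]ord1 [j]ord1 !mxE.
Qed.

End QuadraticCharacter.

Section DoublingConstruction.

Context {R : numDomainType} {n k : nat}.
Implicit Types (C D : 'M[R]_n) (s : 'S_n).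

Definition double_mx C D : 'M[R]_(n + n) := block_mx C D C (- D).

Lemma double_mx_weighing C D : weighing_matrix k C -> weighing_matrix k D ->
  weighing_matrix (2 * k) (double_mx C D).
Proof.
move=> [tC CCt] [tD DDt]; rewrite /double_mx; split.
  by apply: trit_block_mx => // i j; rewrite mxE; apply: trit_opp.
rewrite tr_block_mx linearN /= mulmx_block !mulmxN !mulNmx opprK CCt DDt subrr.
by rewrite [RHS]scalar_mx_block mul2n -addnn natrD raddfD.
Qed.

Lemma weighing_perm_mul s C : weighing_matrix k C -> weighing_matrix k (perm_mx s *m C).
Proof.
move=> [tC CCt]; split; first by move=> i j; rewrite -row_permE mxE.
rewrite trmx_mul mulmxA -(mulmxA _ C) CCt mul_mx_scalar -scalemxAl.
by rewrite tr_perm_mx -perm_mxM mulgV perm_mx1 scalemx1.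
Qed.

Definition perm_block_mx s : 'M[R]_(n + n) :=
  block_mx (1%:M + perm_mx s) (1%:M - perm_mx s) (1%:M - perm_mx s) (1%:M + perm_mx s).

Lemma perm_block_mx_weighing s : (forall i, s i != i) -> weighing_matrix 4 (perm_block_mx s).
Proof.
move=> s_fpf; rewrite /perm_block_mx; split.
  have not_both i j : ~~ ((i == j) && (s i == j)).
    by apply/andP => -[/eqP <-]; apply/negP.
  apply: trit_block_mx => i j; rewrite !mxE;
    case: (i == j) (s i == j) (not_both i j) => -[] //= _;
    by rewrite /trit ?subrr ?addr0 ?add0r ?subr0 ?sub0r; auto.
rewrite tr_block_mx !linearD !linearN /= trmx1 tr_perm_mx mulmx_block.
rewrite !(mulmxDl, mulmxDr, mulmxN, mulNmx, mul1mx, mulmx1) -perm_mxM mulgV perm_mx1.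
rewrite [RHS]scalar_mx_block.
by congr block_mx; apply/matrixP => i j; rewrite !mxE;
  case: (i == j); rewrite ?mulr1n ?mulr0n; ring.
Qed.

Lemma mul_double_mx_perm_tr s C : C *m C^T = k%:R%:M ->
  double_mx C C *m (double_mx C (perm_mx s^-1 *m C))^T = k%:R *: perm_block_mx s.
Proof.
move=> CCt; set D := perm_mx s^-1 *m C; have CDt : C *m D^T = k%:R *: perm_mx s.
  by rewrite trmx_mul tr_perm_mx invgK mulmxA CCt mul_scalar_mx.
rewrite /double_mx tr_block_mx linearN /= mulmx_block !mulmxN !mulNmx opprK CCt CDt.
by rewrite /perm_block_mx scale_block_mx !scalerDr !scalerN scalemx1.
Qed.

End DoublingConstruction.

Lemma quasi_unbiased_double_mx (R : rcfType) n k (C : 'M[R]_n) (s : 'S_n) :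
  (0 < k)%N -> weighing_matrix k C -> (forall i, s i != i) ->
  quasi_unbiased (2 * k) 4 (k ^ 2) (double_mx C C) (double_mx C (perm_mx s^-1 *m C)).
Proof.
move=> k_gt0 wC s_fpf.
split; [exact: double_mx_weighing | exact/double_mx_weighing/weighing_perm_mul |].
have k_nz : (k%:R : R) != 0 by rewrite pnatr_eq0 -lt0n.
rewrite (mul_double_mx_perm_tr s C wC.2).
rewrite natrX sqrtr_sqr ger0_norm ?ler0n // scalerA mulVf // scale1r.
exact: perm_block_mx_weighing.
Qed.

Lemma ordS_neq n (i : 'I_n) : (1 < n)%N -> ordS i != i.
Proof.
move=> n_gt1; apply/eqP => /(congr1 val) /=.
have := ltn_ord i; rewrite leq_eqVlt => /orP[/eqP n_def | lt_in].
  by rewrite -[X in (_ %% X)%N]n_def modnn; lia.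
by rewrite modn_small //; lia.
Qed.

Theorem proposition4p10 (R : rcfType) (p q : nat) :
  prime_power p -> (p %% 4 = 1)%N -> (2 * q = p + 1)%N ->
  exists W1 W2 : 'M[R]_(4 * q),
    quasi_unbiased (n:=4 * q) (4 * q - 2)%N 4 ((2 * q - 1) ^ 2)%N W1 W2.
Proof.
move=> [r [m [r_prime [m_gt0 p_def]]]] p_mod4 q_def.
have [F _ cardF] := pPrimePowerField r_prime m_gt0; rewrite -p_def in cardF.
have oddF : odd #|F| by rewrite cardF (divn_eq p 4) p_mod4 oddD oddM andbF.
have F_gt1 := finNzRing_gt1 F.
pose s : 'S_(1 + #|F|) := perm (@ordS_inj _).
have s_fpf i : s i != i by rewrite permE ordS_neq //; lia.
(* #|F| occurs in the types of the matrices, so it is replaced by p only after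
   abstracting them. *)
have : exists W1 W2 : 'M[R]_((1 + #|F|) + (1 + #|F|)),
    quasi_unbiased (2 * #|F|) 4 (#|F| ^ 2) W1 W2.
  by do 2 eexists; apply: quasi_unbiased_double_mx (paley_mx_weighing R F oddF) s_fpf; lia.
rewrite cardF (_ : (4 * q - 2 = 2 * p)%N); last by lia.
rewrite (_ : ((2 * q - 1) ^ 2 = p ^ 2)%N); last by congr (_ ^ _)%N; lia.
by rewrite (_ : (4 * q = (1 + p) + (1 + p))%N); last by lia.
Qed.
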